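(* If a Tychonoff space $X$ contains an infinite discrete clopen subset, then $X$ does not have CSHP.
   Context: For a Tychonoff space $Y$, $\operatorname{Homeo}_{cpt}(Y)$ is the group of homeomorphisms of $Y$ with compact support $\operatorname{cl}_Y\{y\mid h(y)\neq y\}$; each extends to a homeomorphism of $\beta Y$ that is the identity on $\beta Y\setminus Y$, and $\operatorname{Homeo}_{cpt}(Y)$ is given the compact-open topology induced from $\beta Y$. For compact $K\subseteq Y$, $\operatorname{Homeo}_K(Y)$ is the subgroup of homeomorphisms fixing every point outside $K$. $Y$ has CSHP if the colimit space topology on $\bigcup_{K\in\mathscr K(Y)}\operatorname{Homeo}_K(Y)=\operatorname{Homeo}_{cpt}(Y)$, namely $\{U\mid U\cap\operatorname{Homeo}_K(Y)\text{ open in }\operatorname{Homeo}_K(Y)\ \forall K\}$ ($\mathscr K(Y)$ the compact subsets of $Y$), coincides with the topology of $\operatorname{Homeo}_{cpt}(Y)$. *)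

From HB Require Import structures.
From mathcomp Require Import all_boot all_order all_algebra.
From mathcomp Require Import all_classical all_reals all_analysis.
From mathcomp Require Import Rstruct Rstruct_topology.

Set Implicit Arguments.
Unset Strict Implicit.
Unset Printing Implicit Defensive.

Local Open Scope classical_set_scope.

Definition Tychonoff (X : topologicalType) : Prop :=
  completely_regular_space X /\ hausdorff_space X.

Definition is_homeo (X : topologicalType) (h : X -> X) : Prop :=
  exists g : X -> X, [/\ cancel h g, cancel g h, continuous h & continuous g].

Definition HomeoCpt (X : topologicalType) : set (X -> X) :=
  [set h | is_homeo h /\ compact (closure [set x | h x <> x])].

Definition HomeoK (X : topologicalType) (K : set X) : set (X -> X) :=
  [set h | @HomeoCpt X h /\ forall x, ~ K x -> h x = x].

Definition is_stone_cech (X B : topologicalType) (e : X -> B) : Prop :=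
  [/\ compact [set: B] /\ hausdorff_space B,
      continuous e /\ injective e,
      (forall U : set X, open U ->
         exists V : set B, open V /\ e @` U = V `&` range e),
      closure (range e) = [set: B] &
      forall (K : topologicalType) (f : X -> K),
        compact [set: K] -> hausdorff_space K -> continuous f ->
        exists g : B -> K, continuous g /\ forall x, g (e x) = f x].

Definition ext (X B : topologicalType) (e : X -> B) (h : X -> X) : B -> B :=
  fun b => match pselect (exists x, e x = b) with
           | left P => e (h (projT1 (cid P)))
           | right _ => b
           end.

(* Open sets of Homeo_cpt(X) in the compact-open topology induced from B
   (via h |-> ext e h into the compact-open topology on B -> B). *)
Definition cpt_open (X B : topologicalType) (e : X -> B) (U : set (X -> X)) :
  Prop :=
  exists W : set {compact-open, B -> B},
    open W /\ U = @HomeoCpt X `&` (fun h => ext e h) @^-1` W.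

(* Open sets of the colimit topology: U meets every Homeo_K(X), K compact,
   in a relatively open set of Homeo_K(X) (with its subspace topology). *)
Definition colim_open (X B : topologicalType) (e : X -> B) (U : set (X -> X)) :
  Prop :=
  forall K : set X, compact K ->
    exists U' : set (X -> X), cpt_open e U' /\ U `&` HomeoK K = U' `&` HomeoK K.

Definition CSHP (X B : topologicalType) (e : X -> B) : Prop :=
  forall U : set (X -> X), U `<=` @HomeoCpt X ->
    (cpt_open e U <-> colim_open e U).

Definition infinite_discrete_clopen (X : topologicalType) (D : set X) : Prop :=
  [/\ infinite_set D,
      (forall d, D d -> exists U : set X, open U /\ U `&` D = [set d]),
      open D & closed D].

From mathcomp Require Import all_boot all_order all_algebra.
From mathcomp Require Import all_classical all_reals all_analysis.
From mathcomp Require Import finmap.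
Local Open Scope classical_set_scope.

(* Let U be the set of compactly supported homeomorphisms sending no point of
   the infinite closed discrete set D to another point of D.  A compact K meets
   D in finitely many points, and on Homeo_K(X) membership in U only depends on
   the images of those points, so U is open in the colimit topology.  But U is
   not open in the compact-open topology induced from beta X: it contains the
   identity, and every basic neighbourhood {g | g(K_i) <= O_i, i < n} of the
   identity contains the transposition of two points of D that lie in exactly
   the same K_i, which exist by the pigeonhole principle. *)

Section Transposition.
Context {T : eqType}.

Definition transp (a b x : T) : T :=
  if x == a then b else if x == b then a else x.

Lemma transpL (a b : T) : transp a b a = b.
Proof. by rewrite /transp eqxx. Qed.

Lemma transpR (a b : T) : transp a b b = a.
Proof. by rewrite /transp eqxx; case: eqP. Qed.

Lemma transp_out (a b x : T) : x <> a -> x <> b -> transp a b x = x.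
Proof. by rewrite /transp => /eqP/negbTE -> /eqP/negbTE ->. Qed.

Lemma transpK (a b : T) : involutive (transp a b).
Proof.
move=> x; case: (eqVneq x a) => [->|xa]; first by rewrite transpL transpR.
case: (eqVneq x b) => [->|xb]; first by rewrite transpR transpL.
by rewrite !transp_out //; apply/eqP.
Qed.

Lemma transp_moved (a b : T) : a <> b -> [set x | transp a b x <> x] = [set a; b].
Proof.
move=> ab; apply/seteqP; split => x /=.
  by apply: contra_notP => /not_orP[xa xb]; rewrite transp_out.
by case=> ->; rewrite ?transpL ?transpR // => /esym.
Qed.

End Transposition.

Lemma transp_continuous {T : topologicalType} (a b : T) :
  open [set a] -> open [set b] -> closed [set a] -> closed [set b] ->
  continuous (transp a b).
Proof.
move=> oa ob ca cb x.
case: (eqVneq x a) => [->|xa].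
  apply: (near_cst_continuous b); apply: filterS (open_nbhs_nbhs (conj oa erefl)).
  by move=> _ ->; rewrite transpL.
case: (eqVneq x b) => [->|xb].
  apply: (near_cst_continuous a); apply: filterS (open_nbhs_nbhs (conj ob erefl)).
  by move=> _ ->; rewrite transpR.
have x_off : (~` [set a] `&` ~` [set b]) x by split; apply/eqP.
have near_id : \near x, id x = transp a b x.
  apply: filterS (open_nbhs_nbhs (conj (openI (closed_openC ca) (closed_openC cb)) x_off)).
  by move=> y [ya yb]; rewrite transp_out.
rewrite /continuous_at transp_out; [|exact/eqP..].
exact: cvg_trans (near_eq_cvg near_id) cvg_id.
Qed.

Lemma transp_HomeoCpt {T : topologicalType} (a b : T) : a <> b ->
  open [set a] -> open [set b] -> closed [set a] -> closed [set b] ->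
  HomeoCpt (transp a b).
Proof.
move=> ab oa ob ca cb; split.
  have transp_cont := transp_continuous a b oa ob ca cb.
  by exists (transp a b); split; try exact: transpK.
rewrite transp_moved // -(proj1 (closure_id _)); last exact: closedU.
by apply: compactU; exact: compact_set1.
Qed.

Lemma HomeoK_moved {T : topologicalType} {K : set T} {h : T -> T} (x : T) :
  HomeoK K h -> h x <> x -> K x /\ K (h x).
Proof.
move=> [[[g [hK _ _ _]] _] h_fix] hx.
by split; apply: contrapT => /h_fix; [|move/(can_inj hK)].
Qed.

Section Extension.
Context {X B : topologicalType} {e : X -> B}.
Hypothesis e_inj : injective e.

Lemma ext_e (h : X -> X) (x : X) : ext e h (e x) = e (h x).
Proof.
rewrite /ext; case: pselect => [P|]; last by case; exists x.
by case: (cid P) => x' /= /e_inj ->.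
Qed.

Lemma ext_fixed (h : X -> X) (y : B) :
  (forall x, e x = y -> h x = x) -> ext e h y = y.
Proof.
rewrite /ext => h_fix; case: pselect => // P.
by case: (cid P) => x /= ex; rewrite h_fix.
Qed.

Lemma ext_transp_image {a b : X} {K : set B} :
  (K (e a) <-> K (e b)) -> ext e (transp a b) @` K `<=` K.
Proof.
move=> Kab _ [y Ky <-].
have [ya|ya] := pselect (y = e a).
  by move: Ky; rewrite ya ext_e transpL (propext Kab).
have [yb|yb] := pselect (y = e b).
  by move: Ky; rewrite yb ext_e transpR (propext Kab).
rewrite ext_fixed // => x ex.
by rewrite transp_out // => xab; [apply: ya|apply: yb]; rewrite -ex xab.
Qed.

End Extension.

Lemma infinite_set_homogeneous {T : Type} (P : seq (set T)) {D : set T} :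
  infinite_set D -> exists2 D' : set T, D' `<=` D /\ infinite_set D' &
    forall p, p \in P -> forall x y, D' x -> D' y -> p x -> p y.
Proof.
elim: P D => [|p P IH] D D_inf.
  by exists D; [split|move=> p; rewrite in_nil].
have [D1 [D1D D1_inf] D1_hom] := IH D D_inf.
have [D1p_fin|D1p_inf] := pselect (finite_set (D1 `&` p)).
- exists (D1 `\` p).
    split; first by move=> x [/D1D].
    apply: sub_infinite_set (infinite_setD D1_inf D1p_fin).
    by move=> x [D1x D1px]; split => // px; apply: D1px.
  move=> q; rewrite in_cons => /orP[/eqP ->|qP] x y [D1x px] [D1y _] //.
  exact: D1_hom.
- exists (D1 `&` p); first by split => // x [/D1D].
  move=> q; rewrite in_cons => /orP[/eqP ->|qP] x y [D1x _] [D1y py] //.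
  exact: D1_hom.
Qed.

Lemma infinite_set_homogeneous_pair {T : Type} (P : seq (set T)) {D : set T} :
  infinite_set D ->
  exists a b, [/\ D a, D b, a <> b & forall p, p \in P -> p a <-> p b].
Proof.
move=> D_inf; have [D' [D'D D'_inf] D'_hom] := infinite_set_homogeneous P D_inf.
have [a D'a] := infinite_setN0 D'_inf.
have [b [D'b ba]] := infinite_setN0 (infinite_setD D'_inf (finite_set1 a)).
by exists a, b; split; [exact: D'D..|move=> ab; apply: ba|split; exact: D'_hom].
Qed.

Lemma cofinite_in_properfilter {T : Type} {A : set T} :
  infinite_set A -> ProperFilter [set S | finite_set (A `\` S)].
Proof.
move=> A_inf; split; first by rewrite /= setD0.
split => /=; first by rewrite setDT.
  by move=> S1 S2 /= S1_cofin S2_cofin; rewrite setDIr finite_setU.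
by move=> S1 S2 S12; apply: sub_finite_set; apply: setDS.
Qed.

Lemma compact_isolatedI_finite {T : topologicalType} {K D : set T} :
  compact K -> closed D -> (forall d, D d -> open [set d]) ->
  finite_set (K `&` D).
Proof.
move=> K_cpt D_closed D_isolated; apply: contrapT => KD_inf.
have F_proper := cofinite_in_properfilter KD_inf.
have FK : finite_set ((K `&` D) `\` K).
  by apply: (@sub_finite_set _ _ set0) => // x [[]].
have [p [Kp p_cluster]] := K_cpt _ F_proper FK.
have [Dp|nDp] := pselect (D p).
- have : ((K `&` D) `\` [set p]) `&` [set p] !=set0.
    apply: p_cluster; last exact: open_nbhs_nbhs (conj (D_isolated p Dp) erefl).
    apply: (sub_finite_set _ (finite_set1 p)) => x [KDx KDx_p].
    by apply: contrapT => xp; apply: KDx_p.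
  by case=> x [[_ xp] /= px].
- have : (K `&` D) `&` ~` D !=set0.
    apply: p_cluster; last exact: open_nbhs_nbhs (conj (closed_openC D_closed) nDp).
    by rewrite /= setDv.
  by case=> x [[_ Dx] nDx].
Qed.

Lemma compact_open_avoid_open {T U : topologicalType} {I : choiceType}
    (F : set I) (x : I -> T) (y : I -> U) :
  accessible_space U -> finite_set F ->
  open ([set g | forall i, F i -> g (x i) <> y i] : set {compact-open, T -> U}).
Proof.
move=> U_T1 /finite_fsetP[S ->]; rewrite openE => g g_avoid.
have : nbhs g (\bigcap_(i in [set` S])
    [set g' : {compact-open, T -> U} | g' @` [set x i] `<=` ~` [set y i]]).
  apply: filter_bigI => i iS; apply: open_nbhs_nbhs; split.
    apply: compact_open_open; first exact: compact_set1.
    exact/closed_openC/accessible_closed_set1.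
  by move=> _ [_ -> <-]; exact: g_avoid.
by apply: filterS => g' g'_avoid i iS; apply: (g'_avoid i iS); exists (x i).
Qed.

Lemma compact_open_closure {T U : topologicalType}
    (G : set {compact-open, T -> U}) (f : {compact-open, T -> U}) :
  (forall l : seq (set T * set U),
     (forall p, p \in l -> [/\ compact p.1, open p.2 & f @` p.1 `<=` p.2]) ->
     exists2 g, G g & forall p, p \in l -> g @` p.1 `<=` p.2) ->
  closure G f.
Proof.
move=> G_approx.
pose admissible (l : seq (set T * set U)) :=
  forall p, p \in l -> [/\ compact p.1, open p.2 & f @` p.1 `<=` p.2].
pose approx (l : seq (set T * set U)) : set {compact-open, T -> U} :=
  [set g | forall p, p \in l -> g @` p.1 `<=` p.2].
have F_filter : Filter (filter_from admissible approx).
  apply: filter_from_filter; first by exists [::] => p; rewrite in_nil.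
  move=> l1 l2 l1_adm l2_adm; exists (l1 ++ l2).
    by move=> p; rewrite mem_cat => /orP[/l1_adm|/l2_adm].
  by move=> g g_approx; split => p pl; apply: g_approx; rewrite mem_cat pl ?orbT.
have F_cvg : filter_from admissible approx --> f.
  apply/compact_open_cvgP => K O K_cpt O_open fKO.
  exists [:: (K, O)]; first by move=> p; rewrite inE => /eqP ->.
  by move=> g /(_ (K, O) (mem_head _ _)).
move=> W /F_cvg [l l_adm lW].
have [g Gg g_approx] := G_approx l l_adm.
by exists g; split; [|exact: lW].
Qed.

Definition jump_free {T : Type} (D : set T) (h : T -> T) : Prop :=
  forall a b, D a -> D b -> a <> b -> h a <> b.

Section JumpFree.
Context {X B : topologicalType} {e : X -> B} {D : set X}.
Hypotheses (e_inj : injective e) (D_isolated : forall d, D d -> open [set d]).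

Lemma colim_open_jump_free : accessible_space B -> closed D ->
  colim_open e (@HomeoCpt X `&` jump_free D).
Proof.
move=> B_T1 D_closed K K_cpt.
have KD_fin := compact_isolatedI_finite K_cpt D_closed D_isolated.
pose P := (K `&` D) `*` (K `&` D) `&` [set p | p.1 <> p.2].
pose W : set {compact-open, B -> B} := [set g | forall p, P p -> g (e p.1) <> e p.2].
exists (@HomeoCpt X `&` (fun h => ext e h) @^-1` W); split.
  exists W; split => //; apply: compact_open_avoid_open => //.
  exact/finite_setIl/finite_setX.
apply/seteqP; split => h [[h_homeo h_sep] hK]; do 2 split => //.
  move=> [a c] [[[_ Da] [_ Dc]] /= ac]; rewrite ext_e // => /e_inj.
  exact: h_sep.
move=> a b Da Db ab hab.
have ha : h a <> a by rewrite hab => /esym.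
have [Ka Kb] := HomeoK_moved a hK ha.
rewrite hab in Kb.
by apply: (h_sep (a, b)); rewrite /= ?ext_e ?hab.
Qed.

Lemma not_cpt_open_jump_free : accessible_space X -> infinite_set D ->
  ~ cpt_open e (@HomeoCpt X `&` jump_free D).
Proof.
move=> X_T1 D_inf [W [W_open W_def]].
have W_id : W (id : {compact-open, B -> B}).
  have : (@HomeoCpt X `&` jump_free D) id.
    split; last by move=> a b _ _.
    split; first by exists id; split => // x; exact: cvg_id.
    rewrite (_ : [set x | id x <> x] = set0) ?closure0; first exact: compact0.
    by apply/seteqP; split => x.
  rewrite W_def => -[_ /=]; rewrite (_ : ext e id = id) //.
  by apply: funext => y; exact: ext_fixed.
pose G : set {compact-open, B -> B} :=
  [set g | exists a b, [/\ D a, D b, a <> b & g = ext e (transp a b)]].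
have : closure G id.
  apply: compact_open_closure => l l_adm.
  have [a [b [Da Db ab ab_eq]]] :=
    infinite_set_homogeneous_pair [seq e @^-1` p.1 | p <- l] D_inf.
  exists (ext e (transp a b)); first by exists a, b.
  move=> p pl; have [_ _] := l_adm p pl; rewrite image_id; apply: subset_trans.
  exact: (ext_transp_image e_inj (ab_eq _ (map_f _ pl))).
move=> /(_ W (open_nbhs_nbhs (conj W_open W_id))) [_ [[a [b [Da Db ab ->]]] W_ab]].
have : (@HomeoCpt X `&` jump_free D) (transp a b).
  rewrite W_def; split => //; apply: transp_HomeoCpt => //;
    by [exact: D_isolated|exact: accessible_closed_set1].
by case=> _ /(_ a b Da Db ab); rewrite transpL.
Qed.

End JumpFree.

Theorem corollary5p6 (X B : topologicalType) (e : X -> B) :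
  Tychonoff X -> is_stone_cech e ->
  (exists D : set X, infinite_discrete_clopen D) ->
  ~ CSHP e.
Proof.
move=> [_ X_T2] [[_ B_T2] [_ e_inj] _ _ _] [D [D_inf D_discrete D_open D_closed]].
have D_isolated : forall d, D d -> open [set d].
  by move=> d /D_discrete [V [V_open <-]]; exact: openI.
move=> cshp.
apply: (not_cpt_open_jump_free e_inj D_isolated (hausdorff_accessible X_T2) D_inf).
apply/(cshp _ (@subIsetl _ _ (jump_free D))).
exact: (colim_open_jump_free e_inj D_isolated (hausdorff_accessible B_T2)).
Qed.
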